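(* Let $n\ge1$. The friendship graph $f_n$ is $(a,d)$-distance antimagic for some integers $a$ and $d\ge0$ if and only if $n=1$ or $n=2$.
   Context: The friendship graph $f_n$ is obtained by identifying one vertex from each of $n$ copies of $K_3$: its vertices are $x_0,x_1,\dots,x_{2n}$ and, for $i=1,\dots,n$, the vertices $x_0,x_{2i-1},x_{2i}$ form a triangle; these are all the edges. For a graph $G=(V,E)$ with $v=|V|$ and a bijection $f:V\to\{1,\dots,v\}$, the vertex-weight of $x$ is $w(x)=\sum_{y\in N(x)}f(y)$ with $N(x)$ the set of neighbours of $x$. For integers $a$ and $d\ge0$, $f$ is an $(a,d)$-distance antimagic labeling if the multiset of vertex-weights equals $\{a,a+d,\dots,a+(v-1)d\}$; $G$ is $(a,d)$-distance antimagic if it admits such a labeling. *)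

From mathcomp Require Import all_boot all_order all_algebra.
Set Implicit Arguments. Unset Strict Implicit. Unset Printing Implicit Defensive.
Import GRing.Theory Num.Theory.

(* Friendship graph f_n on vertices x_0, ..., x_{2n}, represented by 'I_(2n+1)
   (vertex i is x_i).  Edges: x_0 -- x_k for k >= 1, and x_{2i-1} -- x_{2i}. *)
Definition friendship_adj (n : nat) : rel 'I_(2 * n + 1) :=
  fun x y =>
    (x != y) &&
    [|| (val x == 0%N), (val y == 0%N) |
        [&& (0 < val x)%N, (0 < val y)%N & ((val x).-1./2 == (val y).-1./2)]].

(* A labeling of a graph on a finite type V (with v = #|V|) is a bijection
   f : V -> {1,...,v}, encoded as an injective function into nat with values
   in [1, v]. *)
Definition is_labeling (V : finType) (f : V -> nat) : Prop :=
  injective f /\ (forall x, (1 <= f x <= #|V|)%N).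

Definition vertex_weight (V : finType) (adj : rel V) (f : V -> nat) (x : V) : nat :=
  (\sum_(y | adj x y) f y)%N.

Definition is_ad_distance_antimagic_labeling (V : finType) (adj : rel V)
    (a d : int) (f : V -> nat) : Prop :=
  is_labeling f /\
  perm_eq [seq (Posz (vertex_weight adj f x)) | x <- enum V]
          [seq (a + (Posz i) * d)%R | i <- iota 0 #|V|].

Definition is_ad_distance_antimagic (V : finType) (adj : rel V) (a d : int) : Prop :=
  exists f : V -> nat, is_ad_distance_antimagic_labeling adj a d f.

From mathcomp Require Import all_boot all_order all_algebra zify.
Import GRing.Theory Num.Theory.

(* Write v = 2n+1, c = f(x_0) for the label of the centre, and S = v(v+1)/2
   for the sum of all labels.  The centre is adjacent to every other vertex,
   so w(x_0) = S - c; the mate of a non-centre vertex y (the third vertex of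
   the triangle through x_0 and y) has exactly x_0 and y as neighbours, so
   its weight is c + f(y).  Hence every c + L with L in [1, v], L <> c, is a
   vertex weight.

   If the weights form the progression a, a+d, ..., a+(v-1)d with d >= 0,
   two labels L, L+1 different from c give two consecutive integers in the
   progression, forcing d = 1.  All weights then lie in an interval of
   length v - 1 = 2n; comparing w(x_0) = S - c with a weight c + L0,
   L0 <= 2, and using c <= 2n+1 yields (2n+1)(n+1) <= 6n+4, i.e. n <= 2.
   Conversely, explicit labelings of f_1 and f_2 are checked by computation. *)

Lemma sum_iota (m k : nat) :
  (2 * \sum_(i <- iota m k) i = k * (2 * m + k - 1))%N.
Proof.
elim: k m => [|k IH] m; first by rewrite big_nil.
by rewrite /= big_cons mulnDr IH; nia.
Qed.

Section Labelings.
Context {V : finType}.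

(* A labeling is exactly a function whose list of values is a permutation of
   1, ..., #|V|; the converse direction makes labelings decidable. *)
Lemma labelingP (f : V -> nat) :
  is_labeling f <-> perm_eq [seq f x | x <- enum V] (iota 1 #|V|).
Proof.
split.
- case=> f_inj f_range.
  have f_uniq : uniq [seq f x | x <- enum V] by rewrite map_inj_uniq ?enum_uniq.
  apply: uniq_perm => //; first exact: iota_uniq.
  apply: (uniq_min_size f_uniq _ _).2.
  + move=> _ /mapP [y _ ->]; rewrite mem_iota; have := f_range y; lia.
  + by rewrite size_map size_iota -cardE.
- move=> f_perm; split.
  + by apply/injectiveP; rewrite /injectiveb /dinjectiveb (perm_uniq f_perm) iota_uniq.
  + move=> x; have : f x \in iota 1 #|V| by rewrite -(perm_mem f_perm) map_f ?mem_enum.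
    rewrite mem_iota; lia.
Qed.

Lemma sum_labels {f : V -> nat} : is_labeling f ->
  (2 * \sum_(x : V) f x = #|V| * #|V|.+1)%N.
Proof.
move/labelingP=> f_perm.
rewrite -big_enum -(big_map f xpredT id) (perm_big _ f_perm) sum_iota; lia.
Qed.

Lemma label_surj {f : V -> nat} : is_labeling f ->
  forall L, (1 <= L <= #|V|)%N -> exists y, f y = L.
Proof.
move/labelingP=> f_perm L L_range.
have : L \in [seq f x | x <- enum V] by rewrite (perm_mem f_perm) mem_iota; lia.
by case/mapP=> y _ ->; exists y.
Qed.

End Labelings.

Local Open Scope ring_scope.

Definition arith_prog (a d : int) (k : nat) : seq int :=
  [seq a + (Posz i) * d | i <- iota 0 k].

Lemma mem_arith_prog {a d : int} {k : nat} {x : int} :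
  x \in arith_prog a d k -> exists2 i : nat, (i < k)%N & x = a + (Posz i) * d.
Proof. by case/mapP=> i; rewrite mem_iota => i_lt ->; exists i. Qed.

Lemma arith_prog_step1 {a d : int} {k : nat} {x : int} : 0 <= d ->
  x \in arith_prog a d k -> x + 1 \in arith_prog a d k -> d = 1.
Proof.
move=> d_ge0 /mem_arith_prog [i _ ->] /mem_arith_prog [j _ step].
have td1 : (Posz j - Posz i) * d = 1 by rewrite mulrBl; lia.
have [t_le0 | t_ge1] : Posz j - Posz i <= 0 \/ 1 <= Posz j - Posz i by lia.
- have : (Posz j - Posz i) * d <= 0 by rewrite mulr_le0_ge0.
  lia.
- have : 1 * d <= (Posz j - Posz i) * d by rewrite ler_wpM2r.
  lia.
Qed.

Lemma arith_prog1_span {a : int} {k : nat} {x y : int} :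
  x \in arith_prog a 1 k -> y \in arith_prog a 1 k -> y <= x + Posz k - 1.
Proof. by move=> /mem_arith_prog [i _ ->] /mem_arith_prog [j j_lt ->]; lia. Qed.

Local Close Scope ring_scope.

Section FriendshipWeights.
Variable n : nat.
Local Notation vertex := 'I_(2 * n + 1).
Local Notation w := (vertex_weight (@friendship_adj n)).

Lemma center_lt : 0 < 2 * n + 1. Proof. by rewrite addn1. Qed.

Definition center : vertex := Ordinal center_lt.

(* x_(2i-1) and x_(2i) are mates; the formula also sends x_0 to itself. *)
Lemma mate_lt (y : vertex) : (if odd y then y.+1 else y.-1) < 2 * n + 1.
Proof.
have := ltn_ord y; have := divn_eq y 2; rewrite modn2.
by case: (odd y) => /=; lia.
Qed.

(* The mate of y: the third vertex of the triangle through x_0 and y. *)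
Definition mate (y : vertex) : vertex := Ordinal (mate_lt y).

Lemma adj_center (z : vertex) : friendship_adj center z = (z != center).
Proof. by rewrite /friendship_adj -!(inj_eq val_inj) /=; lia. Qed.

Lemma adj_mate (y : vertex) : y != center ->
  friendship_adj (mate y) =1 [pred z | (z == center) || (z == y)].
Proof.
move=> + z; rewrite /friendship_adj /= -!(inj_eq val_inj) /= -!divn2.
have := ltn_ord y; have := divn_eq y 2; rewrite modn2.
by case: (odd y) => /=; lia.
Qed.

Lemma weight_center (f : vertex -> nat) : w f center + f center = \sum_x f x.
Proof.
rewrite (bigD1 center) //= addnC; congr (_ + _).
by apply: eq_bigl => z; rewrite adj_center.
Qed.

Lemma weight_mate (f : vertex -> nat) (y : vertex) : y != center ->
  w f (mate y) = f center + f y.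
Proof.
move=> y_ne0; rewrite /vertex_weight (eq_bigl _ _ (adj_mate _ y_ne0)).
rewrite (bigD1 center) ?eqxx //=; congr (_ + _).
rewrite -(big_pred1_eq addn y f); apply: eq_bigl => z.
by case: (eqVneq z center) => [-> | _]; rewrite ?eqxx /= ?andbT // eq_sym (negPf y_ne0).
Qed.

End FriendshipWeights.

Lemma friendship_not_antimagic {n : nat} {a d : int} : 3 <= n -> (0 <= d)%R ->
  ~ is_ad_distance_antimagic (@friendship_adj n) a d.
Proof.
move=> n_ge3 d_ge0 [f [f_lab w_perm]].
set v := #|'I_(2 * n + 1)|; have card_v : v = 2 * n + 1 by rewrite /v card_ord.
set c := f (center n).
have c_range : 1 <= c <= 2 * n + 1 by rewrite -card_v; exact: f_lab.2.
have weight_in_prog x :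
    Posz (vertex_weight (@friendship_adj n) f x) \in arith_prog a d v.
  by rewrite -(perm_mem w_perm) map_f ?mem_enum.
have mate_in_prog L : 1 <= L <= 2 * n + 1 -> L != c ->
    Posz (c + L) \in arith_prog a d v.
  move=> L_range L_ne_c; have [|y fy] := label_surj f_lab L; first by rewrite -/v card_v.
  have y_ne0 : y != center n by apply: contra_neq L_ne_c => y0; rewrite -fy y0.
  by rewrite -fy -weight_mate.
(* Two consecutive labels L1, L1 + 1 avoiding c give consecutive weights. *)
pose L1 := if 3 <= c then 1 else 2 * n.
have L1_in : Posz (c + L1) \in arith_prog a d v.
  by apply: mate_in_prog; rewrite /L1; case: ifP; try apply/eqP; lia.
have L1S_in : (Posz (c + L1) + 1)%R \in arith_prog a d v.
  by rewrite -PoszD -addnA; apply: mate_in_prog; rewrite /L1; case: ifP; try apply/eqP; lia.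
have d1 : d = 1%R := arith_prog_step1 d_ge0 L1_in L1S_in.
(* A small weight c + L0 with L0 <= 2 lies within 2n of w(x_0) = S - c. *)
pose L0 := if c == 1 then 2 else 1.
have center_close : (Posz (vertex_weight (@friendship_adj n) f (center n))
                    <= Posz (c + L0) + Posz v - 1)%R.
  apply: arith_prog1_span; rewrite -d1 ?weight_in_prog //.
  by apply: mate_in_prog; rewrite /L0; case: ifP; try apply/eqP; lia.
(* Since 2S = (2n+1)(2n+2), this reads (2n+1)(n+1) <= 2c + L0 + 2n. *)
have labels_sum := sum_labels f_lab; rewrite -/v card_v in labels_sum.
have := weight_center _ f; rewrite -/c; move: center_close; rewrite card_v /L0.
by case: ifP; nia.
Qed.

Definition friendship_nat_adj : rel nat := fun k j =>
  (k != j) && [|| k == 0, j == 0 | [&& 0 < k, 0 < j & k.-1./2 == j.-1./2]].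

Lemma map_enum_ord (T : Type) (m : nat) (F : nat -> T) :
  [seq F (val i) | i <- enum 'I_m] = [seq F k | k <- iota 0 m].
Proof. by rewrite -val_enum_ord -map_comp. Qed.

(* The weights of a labeling of f_n given by a function of the indices, as a
   list computable by evaluation. *)
Lemma friendship_weightsE (n : nat) (F : nat -> nat) :
  [seq Posz (vertex_weight (@friendship_adj n) (fun x => F (val x)) x)
     | x <- enum 'I_(2 * n + 1)] =
  [seq Posz (\sum_(0 <= j < 2 * n + 1 | friendship_nat_adj k j) F j)
     | k <- iota 0 (2 * n + 1)].
Proof.
rewrite -map_enum_ord; apply: eq_map => x.
by rewrite /vertex_weight big_mkord.
Qed.

(* f_1 = K_3 with labels 2, 1, 3 has weights 4, 5, 3. *)
Lemma friendship1_antimagic : is_ad_distance_antimagic (@friendship_adj 1) 3 1.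
Proof.
exists (fun x => nth 0 [:: 2; 1; 3] (val x)); split.
- by apply/labelingP; rewrite map_enum_ord card_ord.
- by rewrite friendship_weightsE card_ord unlock; vm_compute.
Qed.

(* f_2 with centre label 5 and labels 1, 2 | 3, 4 has weights 10, 7, 6, 9, 8. *)
Lemma friendship2_antimagic : is_ad_distance_antimagic (@friendship_adj 2) 6 1.
Proof.
exists (fun x => nth 0 [:: 5; 1; 2; 3; 4] (val x)); split.
- by apply/labelingP; rewrite map_enum_ord card_ord.
- by rewrite friendship_weightsE card_ord unlock; vm_compute.
Qed.

Theorem mainTheorem15 (n : nat) (hn : (1 <= n)%N) :
  (exists (a d : int), (0 <= d)%R /\ is_ad_distance_antimagic (@friendship_adj n) a d)
  <-> (n = 1%N \/ n = 2%N).
Proof.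
split.
- move=> [a [d [d_ge0 antimagic]]].
  have [n_ge3 | n_le2] := leqP 3 n.
  + by case: (friendship_not_antimagic n_ge3 d_ge0 antimagic).
  + lia.
- case=> ->.
  + by exists (Posz 3), (Posz 1); split; last exact: friendship1_antimagic.
  + by exists (Posz 6), (Posz 1); split; last exact: friendship2_antimagic.
Qed.
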